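(* Let $\mathcal{Z}=\{\boldsymbol{z}_1,\dots,\boldsymbol{z}_N\}\subset\mathbb{R}^d$ and let $\boldsymbol{z}$ be uniformly distributed on $\mathcal{Z}$, i.e. $\mathbb{P}(\boldsymbol{z}=\boldsymbol{z}_i)=1/N$. Let $\boldsymbol{U}\subset[N]$ be a random index set of size $b$ sampled uniformly without replacement, and let $\boldsymbol{V}\subset[N]$ be a random index set of size $N-1$ sampled uniformly without replacement, independent of $\boldsymbol{U}$. For an index set $I$ let $\bar{\mathcal{Z}}_I$ be the average of $\{\boldsymbol{z}_i:i\in I\}$. Then $$\mathbb{E}_{\boldsymbol{U},\boldsymbol{V}}\left(\frac{(b-|\boldsymbol{U}\cap\boldsymbol{V}|)^2}{b^2}(\bar{\mathcal{Z}}_{\boldsymbol{V}}-\bar{\mathcal{Z}}_{\boldsymbol{U}\cap\boldsymbol{V}^c})(\bar{\mathcal{Z}}_{\boldsymbol{V}}-\bar{\mathcal{Z}}_{\boldsymbol{U}\cap\boldsymbol{V}^c})^\top\right)=\frac{1}{Nb}\left(\frac{N}{N-1}\right)^2\mathrm{Cov}(\boldsymbol{z}).$$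
   Context: $\boldsymbol{V}^c=[N]\setminus\boldsymbol{V}$. When $\boldsymbol{U}\cap\boldsymbol{V}^c=\emptyset$ the prefactor $(b-|\boldsymbol{U}\cap\boldsymbol{V}|)^2/b^2$ is $0$ and the integrand is taken to be $0$. $\mathrm{Cov}(\boldsymbol{z})=\frac1N\sum_i(\boldsymbol{z}_i-\bar{\boldsymbol{z}})(\boldsymbol{z}_i-\bar{\boldsymbol{z}})^\top$ is the covariance of the uniform distribution on $\mathcal{Z}$. *)

From mathcomp Require Import all_boot all_order all_algebra.
Set Implicit Arguments. Unset Strict Implicit. Unset Printing Implicit Defensive.
Import Order.TTheory GRing.Theory Num.Theory.
Local Open Scope ring_scope.

(* Average of the points z_i, i in I (0 when I is empty; never used then
   with a nonzero weight). *)
Definition setavg (R : realFieldType) (N d : nat) (z : 'I_N -> 'cV[R]_d)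
  (I : {set 'I_N}) : 'cV[R]_d :=
  (#|I|%:R)^-1 *: \sum_(i in I) z i.

Definition mean (R : realFieldType) (N d : nat) (z : 'I_N -> 'cV[R]_d)
  : 'cV[R]_d := (N%:R)^-1 *: \sum_(i < N) z i.

Definition Cov (R : realFieldType) (N d : nat) (z : 'I_N -> 'cV[R]_d)
  : 'M[R]_d :=
  (N%:R)^-1 *: \sum_(i < N) ((z i - mean z) *m (z i - mean z)^T).

Definition E_UV (R : realFieldType) (N d b k : nat)
  (f : {set 'I_N} -> {set 'I_N} -> 'M[R]_d) : 'M[R]_d :=
  ((#|[set U : {set 'I_N} | #|U| == b]| * #|[set V : {set 'I_N} | #|V| == k]|)%:R)^-1
  *: \sum_(U : {set 'I_N} | #|U| == b) \sum_(V : {set 'I_N} | #|V| == k) f U V.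

From mathcomp Require Import all_boot all_order all_algebra.
From mathcomp Require Import ring zify.
Import Order.TTheory GRing.Theory Num.Theory.
Local Open Scope ring_scope.

(* The sets of size N - 1 are the complements V = [N] \ {j}, so U ∩ V^c is
   {j} when j ∈ U and empty otherwise; in the latter case |U ∩ V| = b and the
   weight vanishes.  When j ∈ U the weight is 1/b^2 and the average over V
   differs from z_j by N/(N-1) (mean - z_j).  A fixed j lies in
   C(N-1, b-1) = b C(N, b) / N of the b-subsets, so averaging over U and j
   leaves (1/(N b)) (N/(N-1))^2 Cov(z). *)

Lemma big_card_setC1 (T : finType) (M : nmodType) (F : {set T} -> M) :
  (0 < #|T|)%N ->
  \sum_(V : {set T} | #|V| == #|T|.-1) F V = \sum_(j : T) F (~: [set j]).
Proof.
move=> T_gt0.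
have inj_setC1 : {in [set: T] &, injective (fun j : T => ~: [set j])}.
  by move=> i j _ _ /setC_inj /set1_inj.
transitivity (\sum_(j in [set: T]) F (~: [set j])); last first.
  by apply: eq_bigl => j; rewrite inE.
rewrite -(big_imset _ inj_setC1); apply: eq_bigl => V.
apply/eqP/imsetP => [cardV | [j _ ->]]; last by rewrite cardsC1.
have /cards1P [j defVC] : #|~: V| == 1%N
  by apply/eqP; have := cardsC V; rewrite cardV; lia.
by exists j; rewrite ?inE // -defVC setCK.
Qed.

Lemma card_draws_mem (T : finType) (b : nat) (j : T) : (0 < b)%N ->
  #|[set U : {set T} | (#|U| == b) && (j \in U)]| = 'C(#|T|.-1, b.-1).
Proof.
move=> b_gt0; rewrite -(cardsC1 j) -cards_draws.
have inj_setU1 : {in [set W : {set T} | W \subset [set~ j] & #|W| == b.-1] &,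
                   injective (setU [set j])}.
  move=> W W' /[!inE] /andP [/subsetP sW _] /andP [/subsetP sW' _] eqW.
  apply/setP => i; have /setP/(_ i) := eqW; rewrite !inE.
  case: eqP => [-> _ | //].
  by apply/idP/idP => [/sW | /sW']; rewrite !inE eqxx.
rewrite -(card_in_imset inj_setU1); apply: eq_card => U; rewrite inE.
apply/andP/imsetP => [[/eqP cardU jU] | [W /[!inE] /andP [sW /eqP cardW] ->]].
  exists (U :\ j); last by rewrite setD1K.
  rewrite !inE; apply/andP; split; first by apply/subsetP => i /[!inE] /andP [].
  by move: cardU; rewrite (cardsD1 j U) jU add1n => <-.
have jW : j \notin W by apply/negP => /(subsetP sW); rewrite !inE eqxx.
by rewrite cardsU1 jW cardW add1n prednK // setU11.
Qed.

Lemma mulmx_trZ (R : comPzRingType) (d : nat) (k : R) (w : 'cV[R]_d) :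
  (k *: w) *m (k *: w)^T = k ^+ 2 *: (w *m w^T).
Proof. by rewrite linearZ /= -scalemxAl -scalemxAr scalerA expr2. Qed.

Section SetAverages.

Variables (R : realFieldType) (N d : nat) (z : 'I_N -> 'cV[R]_d).

Lemma setavg1 (j : 'I_N) : setavg z [set j] = z j.
Proof. by rewrite /setavg cards1 big_set1 invr1 scale1r. Qed.

Lemma setavg_setC1 (j : 'I_N) : (1 < N)%N ->
  setavg z (~: [set j]) - z j = (N%:R / N.-1%:R) *: (mean z - z j).
Proof.
move=> N_gt1; rewrite /setavg /mean cardsC1 card_ord.
have -> : \sum_(i in ~: [set j]) z i = \sum_i z i - z j.
  rewrite [in RHS](bigD1 j) //= addrC addrK.
  by apply: eq_bigl => i; rewrite !inE.
have N_neq0 : N%:R != 0 :> R by rewrite pnatr_eq0; lia.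
have N1_neq0 : N.-1%:R != 0 :> R by rewrite pnatr_eq0; lia.
have coefS : N%:R / N.-1%:R * N%:R^-1 = N.-1%:R^-1 :> R.
  by field; apply/andP.
have coefz : N.-1%:R^-1 + 1 = N%:R / N.-1%:R :> R.
  by rewrite -[in RHS](prednK (ltnW N_gt1)) -natr1; field.
rewrite !scalerBr scalerA coefS -addrA -opprD -[X in _ - (_ + X)]scale1r.
by rewrite -scalerDl coefz.
Qed.

Lemma integrand_setC1 (b : nat) (U : {set 'I_N}) (j : 'I_N) :
  (1 < N)%N -> #|U| = b ->
  ((b%:R - #|U :&: ~: [set j]|%:R) ^+ 2 / b%:R ^+ 2) *:
    ((setavg z (~: [set j]) - setavg z (U :&: ~: ~: [set j])) *m
     (setavg z (~: [set j]) - setavg z (U :&: ~: ~: [set j]))^T)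
  = if j \in U then ((b%:R ^+ 2)^-1 * (N%:R / N.-1%:R) ^+ 2) *:
                      ((z j - mean z) *m (z j - mean z)^T)
    else 0.
Proof.
move=> N_gt1 cardU; have := cardsD1 j U; rewrite setDE setCK cardU.
case: ifP => [jU | /negbT jU ->]; last by rewrite add0n subrr expr0n mul0r scale0r.
rewrite add1n => ->; rewrite -addn1 natrD addrC addKr expr1n mul1r.
rewrite (setIidPr (_ : [set j] \subset U)) ?sub1set // setavg1 setavg_setC1 //.
by rewrite -opprB scalerN -scaleNr mulmx_trZ sqrrN scalerA.
Qed.

End SetAverages.

Theorem lemma6 (R : realFieldType) (N d b : nat) (z : 'I_N -> 'cV[R]_d)
  (hN : (2 <= N)%N) (hb1 : (1 <= b)%N) (hbN : (b <= N)%N) :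
  @E_UV R N d b N.-1
    (fun U V =>
       ((b%:R - #|U :&: V|%:R) ^+ 2 / (b%:R) ^+ 2) *:
       ((setavg z V - setavg z (U :&: ~: V)) *m
        (setavg z V - setavg z (U :&: ~: V))^T))
  = ((N * b)%:R)^-1 * (N%:R / (N.-1)%:R) ^+ 2 *: Cov z.
Proof.
have card_V : 'C(N, N.-1) = N by rewrite -subn1 bin_sub ?bin1 //; lia.
rewrite /E_UV !card_draws card_ord card_V exchange_big /=.
rewrite (eq_bigl (fun V : {set 'I_N} => #|V| == #|'I_N|.-1)) => [|V]; last first.
  by rewrite card_ord.
rewrite big_card_setC1 ?card_ord; last lia.
under eq_bigr => j _.
  under eq_bigr => U /eqP cardU do rewrite integrand_setC1 //.
  rewrite -big_mkcondr sumr_const -cardsE card_draws_mem // card_ord.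
  rewrite -scaler_nat scalerA.
  over.
rewrite -scaler_sumr /Cov !scalerA; congr (_ *: _).
have N_neq0 : N%:R != 0 :> R by rewrite pnatr_eq0; lia.
have N1_neq0 : N.-1%:R != 0 :> R by rewrite pnatr_eq0; lia.
have b_neq0 : b%:R != 0 :> R by rewrite pnatr_eq0; lia.
have Cb_neq0 : 'C(N, b)%:R != 0 :> R by rewrite pnatr_eq0 -lt0n bin_gt0.
have count_N : (N * 'C(N.-1, b.-1) = b * 'C(N, b))%N.
  by rewrite mul_bin_diag prednK.
have -> : 'C(N.-1, b.-1)%:R = b%:R * 'C(N, b)%:R / N%:R :> R.
  by rewrite -natrM -count_N natrM mulrC mulKf.
by rewrite !natrM; field; apply/and4P.
Qed.
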